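(* Fix positive integers $n$, $k\le n$ and $h$, and an integer $t\ge 0$. Pick an exact pattern $\rho$ of length $k$ from $[n]$ uniformly at random (i.e., a uniformly random sequence of $k$ distinct elements of $[n]$). Then the probability that the set intersection $\rho\cap(\rho+h)$ has size at least $t$ and there exists a permutation $\pi\in S_n$ such that $\rho$ and $\rho+h$ are both exact patterns in $\pi$ is at most $$\frac{2^{2k-t}k^{k-t}}{k!}.$$
   Context: For a sequence $\sigma=(\sigma(1),\dots,\sigma(n))$ of distinct integers (e.g. a permutation $\pi\in S_n$ written in one-line notation), an exact pattern of $\sigma$ is a sequence $\rho=(\rho(1),\dots,\rho(k))$ of distinct integers such that there are indices $1\le i_1<\dots<i_k\le n$ with $\sigma(i_j)=\rho(j)$ for all $j$. An exact pattern of length $k$ from $[n]$ is any sequence of $k$ distinct elements of $[n]$. For a sequence $\rho$ and integer $h$, $\rho+h$ is the sequence $(\rho(1)+h,\dots,\rho(k)+h)$, and $\rho\cap(\rho+h)$ denotes the intersection of the underlying sets. *)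

From HB Require Import structures.
From mathcomp Require Import all_boot all_order all_algebra all_fingroup.
Set Implicit Arguments. Unset Strict Implicit. Unset Printing Implicit Defensive.

(* [n] = {1,...,n}; an element i : 'I_n represents the integer i+1. *)

Definition oneline n (pi : 'S_n) : seq nat := [seq (pi i).+1 | i <- enum 'I_n].

(* rho is an exact pattern of sigma: rho = (sigma(i_1),...,sigma(i_k)) with
   i_1 < ... < i_k, i.e. rho is a subsequence of sigma. *)
Definition exact_pattern (rho sigma : seq nat) : bool := subseq rho sigma.

Definition pat_val k n (r : k.-tuple 'I_n) : seq nat := [seq (val i).+1 | i : 'I_n <- r].

Definition shift (h : nat) (s : seq nat) : seq nat := [seq x + h | x <- s].

Definition inter_size (s u : seq nat) : nat := size (undup [seq x <- s | x \in u]).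

Definition patterns k n : {set k.-tuple 'I_n} := [set r : k.-tuple 'I_n | uniq r].

Definition good_patterns k n h t : {set k.-tuple 'I_n} :=
  [set r : k.-tuple 'I_n | uniq r
           && (t <= inter_size (pat_val r) (shift h (pat_val r)))
           && [exists pi : 'S_n, exact_pattern (pat_val r) (oneline pi)
                                 && exact_pattern (shift h (pat_val r)) (oneline pi)]].

From HB Require Import structures.
From mathcomp Require Import all_boot all_order all_algebra all_fingroup.
From mathcomp Require Import zify ring.
Import GRing.Theory Num.Theory.
Set Implicit Arguments. Unset Strict Implicit. Unset Printing Implicit Defensive.

(* If rho and rho + h are both subsequences of one permutation, then sending
   the position of an entry x of rho with x + h in rho to the position of x + h
   is strictly increasing, so it is the unique increasing bijection from its
   domain onto the positions of the entries that are not chain starts (entries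
   x with x - h not in rho).  Hence rho is recovered, by increasing value, from
   its underlying set, the domain of that map (2^k choices) and the positions
   of the at most k - t chain starts (k^(k-t) choices).  This gives at most
   C(n,k) 2^k k^(k-t) good patterns among the C(n,k) k! patterns. *)

Lemma subseq_index_lt (T : eqType) (s s' : seq T) x y :
  subseq s s' -> uniq s' -> x \in s -> y \in s ->
  (index x s < index y s) = (index x s' < index y s').
Proof.
move=> sub_ss' uniq_s' xs ys.
have /(subseq_pairwise sub_ss')/(pairwiseP x) ordered_s :
    pairwise (fun a b => index a s' < index b s') s'.
  by apply/(pairwiseP x) => i j i_lt j_lt ij; rewrite !index_uniq.
have index_mono a b : a \in s -> b \in s ->
    index a s < index b s -> index a s' < index b s'.
  move=> as_ bs ab.
  rewrite -(nth_index x as_) -(nth_index x bs).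
  by apply: ordered_s; rewrite ?[_ \in gtn _]index_mem.
case: ltngtP => [/index_mono -> // | /(index_mono _ _ ys xs) | /(index_inj x xs ys) ->].
- by move=> /ltnW; rewrite leqNgt => /negbTE ->.
- by rewrite ltnn.
Qed.

Definition ord_rank k (D : {set 'I_k}) (i : 'I_k) : nat := #|[set d in D | d < i]|.

Lemma ord_rank_ltn k (D : {set 'I_k}) (i j : 'I_k) :
  i \in D -> i < j -> ord_rank D i < ord_rank D j.
Proof.
move=> iD ij; apply/proper_card/properP; split.
  by apply/subsetP => d; rewrite !inE => /andP[-> /ltn_trans->].
by exists i; rewrite !inE ?iD ?ij // ltnn.
Qed.

Lemma ord_rank_inj k (D : {set 'I_k}) : {in D &, injective (ord_rank D)}.
Proof.
move=> i j iD jD eq_ij; apply: val_inj.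
by case: (ltngtP i j) => // [/(ord_rank_ltn iD) | /(ord_rank_ltn jD)]; rewrite eq_ij ltnn.
Qed.

Lemma ord_rank_imset k m (f : 'I_k -> 'I_m) (A : {set 'I_k}) j :
  {in A &, {mono f : x y / x < y}} -> j \in A ->
  ord_rank (f @: A) (f j) = ord_rank A j.
Proof.
move=> f_mono jA.
have f_inj : {in A &, injective f}.
  move=> x y xA yA fxy; apply: val_inj.
  by case: (ltngtP x y); rewrite // -f_mono // fxy ltnn.
rewrite /ord_rank; have -> : [set d in f @: A | d < f j] = f @: [set x in A | x < j].
  apply/setP => d; rewrite inE; apply/andP/imsetP.
  - by case=> /imsetP[x xA ->]; rewrite f_mono // => xj; exists x; rewrite ?inE ?xA.
  - by case=> x /setIdP[xA xj] ->; rewrite imset_f // f_mono.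
by rewrite card_in_imset // => x y /setIdP[xA _] /setIdP[yA _]; apply: f_inj.
Qed.

Lemma size_pat_val n k (r : k.-tuple 'I_n) : size (pat_val r) = k.
Proof. by rewrite size_map size_tuple. Qed.

Lemma uniq_pat_val n k (r : k.-tuple 'I_n) : uniq r -> uniq (pat_val r).
Proof. by move=> uniq_r; rewrite map_inj_uniq // => x y [/val_inj]. Qed.

Lemma nth_pat_val n k (r : k.-tuple 'I_n) (i : 'I_k) :
  nth 0 (pat_val r) i = (val (tnth r i)).+1.
Proof. by rewrite (nth_map (tnth r i)) ?size_tuple // -tnth_nth. Qed.

Lemma uniq_oneline n (pi : 'S_n) : uniq (oneline pi).
Proof. by rewrite map_inj_uniq ?enum_uniq // => x y [/val_inj/perm_inj]. Qed.

Section ShiftedPatterns.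

Variables n k h : nat.
Implicit Types (r : k.-tuple 'I_n) (S : {set 'I_n}).

Definition chain_start S (x : 'I_n) : bool :=
  (x \in S) && [forall y in S, val x != val y + h].

Definition shift_pos r : {set 'I_k} :=
  [set j | [exists y in r, val y == val (tnth r j) + h]].

Definition nonstart_pos r : {set 'I_k} :=
  [set d | ~~ chain_start [set y in r] (tnth r d)].

(* The default [j] is junk: only used for [j] outside [shift_pos r]. *)
Definition shift_index r (j : 'I_k) : 'I_k :=
  odflt j [pick i | val (tnth r i) == val (tnth r j) + h].

Definition start_index r : {ffun 'I_n -> option 'I_k} :=
  [ffun x => if chain_start [set y in r] x then [pick i | tnth r i == x] else None].

Definition cooccur r : bool :=
  [exists pi : 'S_n, exact_pattern (pat_val r) (oneline pi)
                     && exact_pattern (shift h (pat_val r)) (oneline pi)].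

Lemma val_shift_index r j :
  j \in shift_pos r -> val (tnth r (shift_index r j)) = val (tnth r j) + h.
Proof.
rewrite inE => /exists_inP[_ /tnthP[i ->] /eqP eq_i].
by rewrite /shift_index; case: pickP => [i' /eqP // | /(_ i)]; rewrite eq_i eqxx.
Qed.

Lemma start_index_Some r x i : start_index r x = Some i -> tnth r i = x.
Proof. by rewrite ffunE; case: ifP => // _; case: pickP => // i' /eqP <- [<-]. Qed.

Lemma start_index_tnth r d : uniq r ->
  chain_start [set y in r] (tnth r d) -> start_index r (tnth r d) = Some d.
Proof.
move=> /tuple_uniqP tnth_inj start_d; rewrite ffunE start_d.
by case: pickP => [i /eqP/tnth_inj -> // | /(_ d)]; rewrite eqxx.
Qed.

Lemma chain_start_tnthE r d : uniq r ->
  chain_start [set y in r] (tnth r d) = [exists x, start_index r x == Some d].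
Proof.
move=> uniq_r; apply/idP/existsP => [start_d | [x /eqP x_d]].
  by exists (tnth r d); rewrite start_index_tnth.
by move: (x_d); rewrite -(start_index_Some x_d) ffunE; case: ifP.
Qed.

Lemma shift_index_imset r : uniq r -> shift_index r @: shift_pos r = nonstart_pos r.
Proof.
move=> /tuple_uniqP tnth_inj; apply/setP => d.
rewrite [RHS]inE /chain_start inE mem_tnth negb_forall_in.
apply/imsetP/exists_inP => [[j jI ->] | [_ /[!inE] /tnthP[j ->]]].
  by exists (tnth r j); rewrite ?inE ?mem_tnth // negbK val_shift_index.
rewrite negbK => /eqP d_j.
have jI : j \in shift_pos r.
  by rewrite inE; apply/exists_inP; exists (tnth r d); rewrite ?mem_tnth ?d_j.
by exists j => //; apply/tnth_inj/val_inj; rewrite val_shift_index.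
Qed.

Lemma shift_index_mono r : uniq r -> cooccur r ->
  {in shift_pos r &, {mono shift_index r : i j / i < j}}.
Proof.
move=> uniq_r /existsP[pi /andP[sub_rho sub_rhoh]] i j iI jI.
have uniq_rho := uniq_pat_val uniq_r.
have uniq_rhoh : uniq (shift h (pat_val r)) by rewrite map_inj_uniq // => x y /addIn.
pose w l := (val (tnth r l)).+1 + h.
have nth_rho l : l \in shift_pos r -> nth 0 (pat_val r) (shift_index r l) = w l.
  by move=> lI; rewrite nth_pat_val val_shift_index.
have nth_rhoh (l : 'I_k) : nth 0 (shift h (pat_val r)) l = w l.
  by rewrite (nth_map 0) ?size_pat_val // nth_pat_val.
have index_rho l : l \in shift_pos r -> index (w l) (pat_val r) = shift_index r l.
  by move=> lI; rewrite -nth_rho // index_uniq ?size_pat_val.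
have index_rhoh (l : 'I_k) : index (w l) (shift h (pat_val r)) = l.
  by rewrite -nth_rhoh index_uniq // /shift size_map size_pat_val.
have mem_rho l : l \in shift_pos r -> w l \in pat_val r.
  by move=> lI; rewrite -nth_rho // mem_nth ?size_pat_val.
have mem_rhoh (l : 'I_k) : w l \in shift h (pat_val r).
  by rewrite -nth_rhoh mem_nth // /shift size_map size_pat_val.
rewrite -index_rho // -(index_rho j) // (subseq_index_lt sub_rho) ?uniq_oneline ?mem_rho //.
by rewrite -(subseq_index_lt sub_rhoh) ?uniq_oneline ?index_rhoh.
Qed.

Lemma ord_rank_shift_index r j : uniq r -> cooccur r -> j \in shift_pos r ->
  ord_rank (nonstart_pos r) (shift_index r j) = ord_rank (shift_pos r) j.
Proof.
move=> uniq_r co_r jI.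
by rewrite -shift_index_imset // ord_rank_imset //; apply: shift_index_mono.
Qed.

Lemma eq_shift_index r1 r2 j : uniq r1 -> uniq r2 -> cooccur r1 -> cooccur r2 ->
  shift_pos r1 = shift_pos r2 -> nonstart_pos r1 = nonstart_pos r2 ->
  j \in shift_pos r1 -> shift_index r1 j = shift_index r2 j.
Proof.
move=> uniq_r1 uniq_r2 co_r1 co_r2 eqI eqN jI.
have jI2 : j \in shift_pos r2 by rewrite -eqI.
(* Both sides have the rank of [j] in [shift_pos] within [nonstart_pos]. *)
apply: (@ord_rank_inj _ (nonstart_pos r1)).
- by rewrite -shift_index_imset // imset_f.
- by rewrite eqN -shift_index_imset // imset_f.
by rewrite ord_rank_shift_index // eqN ord_rank_shift_index // eqI.
Qed.

Lemma pattern_encoding_inj r1 r2 : 0 < h ->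
  uniq r1 -> uniq r2 -> cooccur r1 -> cooccur r2 ->
  [set y in r1] = [set y in r2] -> shift_pos r1 = shift_pos r2 ->
  start_index r1 = start_index r2 -> r1 = r2.
Proof.
move=> h_gt0 uniq_r1 uniq_r2 co_r1 co_r2 eqS eqI eqF.
have eqN : nonstart_pos r1 = nonstart_pos r2.
  by apply/setP => d; rewrite !inE !chain_start_tnthE // eqF.
suff tnth_eq m i : val (tnth r1 i) < m -> tnth r1 i = tnth r2 i.
  by apply: eq_from_tnth => i; apply: (tnth_eq (val (tnth r1 i)).+1).
elim: m i => // m IH i.
have [start_i _ | nonstart_i] := boolP (chain_start [set y in r1] (tnth r1 i)).
  by apply/esym/start_index_Some; rewrite -eqF start_index_tnth.
(* A non-start is y + h for some y of smaller value, already placed. *)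
have : i \in nonstart_pos r1 by rewrite inE.
rewrite -shift_index_imset // => /imsetP[j jI ->] lt_m.
have eq_j : tnth r1 j = tnth r2 j.
  by apply: IH; move: lt_m; rewrite val_shift_index //; lia.
rewrite {2}(eq_shift_index uniq_r1 uniq_r2 co_r1 co_r2 eqI eqN jI); apply: val_inj.
by rewrite !val_shift_index -?eqI // eq_j.
Qed.

Lemma card_chain_start r : uniq r ->
  #|[set x | chain_start [set y in r] x]|
    + inter_size (pat_val r) (shift h (pat_val r)) = k.
Proof.
move=> uniq_r; set S := [set y in r].
have card_starts : #|[set x | chain_start S x]| = count (chain_start S) r.
  rewrite -size_filter; have /card_uniqP <- := filter_uniq (chain_start S) uniq_r.
  apply: eq_card => x; rewrite mem_filter inE andb_idr // => /andP[].
  by rewrite inE.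
have inter_nonstarts :
    inter_size (pat_val r) (shift h (pat_val r)) = count (predC (chain_start S)) r.
  rewrite /inter_size undup_id ?filter_uniq ?uniq_pat_val // size_filter count_map.
  apply: eq_in_count => x xr /=.
  rewrite /shift /pat_val -map_comp /chain_start /S inE xr negb_forall_in.
  apply/mapP/exists_inP => [[y yr /=] | [y /[!inE] yr /negbNE/eqP x_y]].
    by rewrite addSn => /succn_inj x_y; exists y; rewrite ?inE // x_y eqxx.
  by exists y; rewrite //= x_y addSn.
by rewrite card_starts inter_nonstarts count_predC size_tuple.
Qed.

Lemma start_index_pffun r :
  start_index r
    \in pffun_on None [set x | chain_start [set y in r] x] [set Some i | i : 'I_k].
Proof.
apply/pffun_onP; split.
  by apply/subsetP => x; rewrite !inE ffunE; case: ifP.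
move=> _ /imageP[x /[!inE] start_x ->]; rewrite ffunE start_x.
case: pickP => [i _ | none]; first exact: imset_f.
by move: start_x => /andP[/[!inE] /tnthP[i x_i] _]; move: (none i); rewrite x_i eqxx.
Qed.

Lemma good_patternsP t r : r \in good_patterns k n h t ->
  [/\ uniq r, t <= inter_size (pat_val r) (shift h (pat_val r)) & cooccur r].
Proof. by rewrite inE => /andP[/andP[]]. Qed.

Lemma good_patterns_t_le_k t r : r \in good_patterns k n h t -> t <= k.
Proof.
case/good_patternsP => uniq_r t_le _.
by rewrite -(card_chain_start uniq_r) (leq_trans t_le) ?leq_addl.
Qed.

Lemma card_good_patterns_set t S : 0 < h -> 0 < k ->
  #|[set r in good_patterns k n h t | [set y in r] == S]| <= 2 ^ k * k ^ (k - t).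
Proof.
move=> h_gt0 k_gt0; set A := [set r in _ | _].
have [-> | [r0]] := set_0Vmem A; first by rewrite cards0.
move=> /setIdP[/good_patternsP[uniq_r0 t_le _] /eqP S_r0].
have card_starts : #|[set x | chain_start S x]| <= k - t.
  by have := card_chain_start uniq_r0; rewrite S_r0; lia.
pose code r := (shift_pos r, start_index r).
rewrite -(card_in_imset (f := code)); last first.
  move=> r1 r2 /setIdP[/good_patternsP[uniq_r1 _ co_r1] /eqP S_r1].
  move=> /setIdP[/good_patternsP[uniq_r2 _ co_r2] /eqP S_r2] [].
  by apply: pattern_encoding_inj => //; rewrite S_r1 S_r2.
have code_sub : code @: A \subset setX (powerset [set: 'I_k])
    [set f in pffun_on None [set x | chain_start S x] [set Some i | i : 'I_k]].
  apply/subsetP => _ /imsetP[r /setIdP[_ /eqP S_r] ->].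
  by rewrite inE powersetE subsetT inE -S_r start_index_pffun.
apply: (leq_trans (subset_leq_card code_sub)).
rewrite cardsX card_powerset cardsT cardsE card_pffun_on card_imset; last by move=> i j [].
by rewrite !card_ord leq_mul // leq_pexp2l.
Qed.

Lemma card_good_patterns t : 0 < h -> 0 < k ->
  #|good_patterns k n h t| <= 'C(n, k) * (2 ^ k * k ^ (k - t)).
Proof.
move=> h_gt0 k_gt0.
rewrite -sum1_card (partition_big (fun r : k.-tuple 'I_n => [set y in r])
  (fun S => #|S| == k)) /=; last first.
  by move=> r /good_patternsP[/card_uniqP card_r _ _]; rewrite cardsE card_r size_tuple.
have -> : 'C(n, k) = #|[set S : {set 'I_n} | #|S| == k]| by rewrite card_draws card_ord.
rewrite -sum_nat_const [X in _ <= X](eq_bigl (fun S : {set 'I_n} => #|S| == k)).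
  by apply: leq_sum => S _; rewrite sum1dep_card card_good_patterns_set.
by move=> S; rewrite inE.
Qed.

End ShiftedPatterns.

Local Open Scope ring_scope.

Theorem lemma3p5 (n k h t : nat) :
  (0 < n)%N -> (0 < k)%N -> (k <= n)%N -> (0 < h)%N ->
  (#|good_patterns k n h t|%:R / #|patterns k n|%:R : rat)
    <= (2%:Q ^ ((2 * k)%:Z - t%:Z)) * ((k%:Q) ^ (k%:Z - t%:Z)) / (k`!)%:R.
Proof.
move=> _ k_gt0 k_le_n h_gt0.
have [t_le_k | k_lt_t] := leqP t k; last first.
  have -> : good_patterns k n h t = set0.
    apply/setP => r; rewrite in_set0; apply/negP => /good_patterns_t_le_k.
    by rewrite leqNgt k_lt_t.
  by rewrite cards0 mul0r divr_ge0 // mulr_ge0 // exprz_ge0.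
have card_patterns : #|patterns k n| = ('C(n, k) * k`!)%N.
  have -> : patterns k n = [set r : k.-tuple 'I_n | all predT r & uniq r].
    by apply/setP => r; rewrite !inE all_predT.
  by rewrite card_uniq_tuples cardT size_enum_ord bin_ffact.
have k_fact_neq0 : (k`!)%:R != 0 :> rat by rewrite pnatr_eq0 -lt0n fact_gt0.
rewrite !subzn -?exprnP //; last by lia.
rewrite card_patterns ler_pdivrMr ?ltr0n ?muln_gt0 ?bin_gt0 ?fact_gt0 ?k_le_n //.
rewrite [X in _ <= X](_ : _ = (2 ^ (2 * k - t) * k ^ (k - t) * 'C(n, k))%N%:R); last first.
  by rewrite !natrM !natrX; field.
rewrite ler_nat (leq_trans (@card_good_patterns n k h t h_gt0 k_gt0)) // mulnC.
by rewrite !leq_mul // leq_pexp2l //; lia.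
Qed.
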